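(* For $k=0,\dots,7$ let $v_k=(\cos(k\pi/4),\sin(k\pi/4))$ (indices mod 8), let $E_k$ be the segment $[v_k,v_{k+1}]$, and let $a_k=1.4\,(\cos((2k+1)\pi/8),\sin((2k+1)\pi/8))$. For $S\subset\{0,\dots,7\}$ let $C_S$ be the closed polygonal curve obtained from the boundary of the regular octagon $v_0v_1\cdots v_7$ by replacing each edge $E_k$ with $k\in S$ by the two segments $[v_k,a_k]\cup[a_k,v_{k+1}]$ (i.e., appending to the octagon congruent isosceles triangles on the edges indexed by $S$). Let $X=C_{\{0,4,5,7\}}$ and $Y=C_{\{0,1,4,7\}}$, each regarded as an mm-space $\mathcal{X},\mathcal{Y}$ with extrinsic Euclidean distance and normalized arclength measure. Then $X$ and $Y$ are not related by any rigid motion of $\mathbb{R}^2$ (so $\mathcal{X}\not\approx\mathcal{Y}$), but $H_{\mathcal{X}}=H_{\mathcal{Y}}$.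
   Context: For an mm-space $\mathcal{X}=(X,d_X,\mu_X)$ (compact metric space with fully supported Borel probability measure), the global distance distribution is $H_{\mathcal{X}}(r)=\mu_X\otimes\mu_X(\{(x,x')\in X\times X: d_X(x,x')\le r\})$ for $r\geq0$. A plane curve is regarded as an mm-space with the restriction of the Euclidean distance of $\mathbb{R}^2$ and arclength measure normalized to total mass one. *)

From Stdlib Require Import Reals Lra List Classical ClassicalEpsilon.
Import ListNotations.
Open Scope R_scope.

Definition point : Type := (R * R)%type.

Definition dist2 (p q : point) : R :=
  sqrt ((fst p - fst q) ^ 2 + (snd p - snd q) ^ 2).

(* Total Riemann integral: RiemannInt when f is Riemann integrable on [a,b], 0 otherwise. *)
Definition RInt (f : R -> R) (a b : R) : R :=
  match excluded_middle_informative (exists _ : Riemann_integrable f a b, True) with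
  | left h => RiemannInt (proj1_sig (constructive_indefinite_description _ h))
  | right _ => 0
  end.

Definition v (k : nat) : point :=
  (cos (INR k * PI / 4), sin (INR k * PI / 4)).
Definition apex (k : nat) : point :=
  (14 / 10 * cos ((2 * INR k + 1) * PI / 8), 14 / 10 * sin ((2 * INR k + 1) * PI / 8)).

Definition segments (S : nat -> bool) : list (point * point) :=
  flat_map (fun k => if S k then [(v k, apex k); (apex k, v (k + 1)%nat)]
                    else [(v k, v (k + 1)%nat)]) (seq 0 8).

Definition lerp (p q : point) (t : R) : point :=
  (fst p + t * (fst q - fst p), snd p + t * (snd q - snd p)).

Definition curve (S : nat -> bool) (x : point) : Prop :=
  exists pq, In pq (segments S) /\ exists t, 0 <= t <= 1 /\ x = lerp (fst pq) (snd pq) t.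

Definition seglen (pq : point * point) : R := dist2 (fst pq) (snd pq).

Definition curve_length (S : nat -> bool) : R :=
  fold_right Rplus 0 (map seglen (segments S)).

Definition ind_le (d r : R) : R := if Rle_dec d r then 1 else 0.

(* mu (x) mu of {(x,x') : |x - x'| <= r}, where mu = normalized arclength on C_S,
   computed as a sum over pairs of segments of (iterated) integrals over the
   linear parametrizations, weighted by the segment lengths. *)
Definition pair_mass (r : R) (e f : point * point) : R :=
  seglen e * seglen f *
  RInt (fun s => RInt (fun t =>
          ind_le (dist2 (lerp (fst e) (snd e) s) (lerp (fst f) (snd f) t)) r) 0 1) 0 1.

Definition H (S : nat -> bool) (r : R) : R :=
  fold_right Rplus 0
    (map (fun e => fold_right Rplus 0 (map (fun f => pair_mass r e f) (segments S)))
         (segments S)) / (curve_length S ^ 2).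

Definition SX (k : nat) : bool := (Nat.eqb k 0 || Nat.eqb k 4 || Nat.eqb k 5 || Nat.eqb k 7)%bool.
Definition SY (k : nat) : bool := (Nat.eqb k 0 || Nat.eqb k 1 || Nat.eqb k 4 || Nat.eqb k 7)%bool.

Definition isometry2 (g : point -> point) : Prop :=
  forall p q, dist2 (g p) (g q) = dist2 p q.

From Stdlib Require Import Reals Lra Lia Psatz List FunctionalExtensionality.
Import ListNotations.
Open Scope R_scope.

(** Both curves are unions of the eight rotations by multiples of [PI/4] of
    one of two blocks: a plain edge of the octagon, or an edge with its
    triangle.  Rotations preserve the double integrals, so the numerator of
    [H S] is a sum over ordered pairs [(i, j)] of a quantity depending only on
    [S i], [S j] and [j - i mod 8], while the length depends only on [|S|].
    The sets [{0,4,5,7}] and [{0,1,4,7}] are homometric in [Z/8] (they have the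
    same multiset of differences), hence [H SX = H SY].

    The apexes are the only points of the curves at the maximal distance [1.4]
    from the origin, and two points of a curve at distance [2.8] are antipodal
    apexes.  If an isometry carries [X] onto [Y], the preimages of the antipodal
    apexes [a_0], [a_4] of [Y] are therefore antipodal apexes of [X]; by the
    parallelogram law the isometry then preserves norms, so it maps apexes to
    apexes.  But [a_0] has two apexes of [Y] at angle [PI/4] from it, namely
    [a_1] and [a_7], whereas no apex of [X] has two such neighbours. *)

Local Notation sumL l := (fold_right Rplus 0 l).

Lemma sumL_app (l1 l2 : list R) : sumL (l1 ++ l2) = sumL l1 + sumL l2.
Proof. induction l1 as [|a l1 IH]; simpl; [ring | rewrite IH; ring]. Qed.

Lemma sumL_map_flat_map {A B : Type} (g : B -> R) (h : A -> list B) (l : list A) :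
  sumL (map g (flat_map h l)) = sumL (map (fun k => sumL (map g (h k))) l).
Proof.
  induction l as [|a l IH]; simpl; auto.
  now rewrite map_app, sumL_app, IH.
Qed.

Lemma sumL_map_plus {A : Type} (f g : A -> R) (l : list A) :
  sumL (map (fun x => f x + g x) l) = sumL (map f l) + sumL (map g l).
Proof. induction l as [|a l IH]; simpl; [ring | rewrite IH; ring]. Qed.

Lemma sumL_map_zero {A : Type} (l : list A) : sumL (map (fun _ => 0) l) = 0.
Proof. induction l as [|a l IH]; simpl; [ring | rewrite IH; ring]. Qed.

Lemma sumL_exchange {A B : Type} (F : A -> B -> R) (l1 : list A) (l2 : list B) :
  sumL (map (fun x => sumL (map (F x) l2)) l1)
  = sumL (map (fun y => sumL (map (fun x => F x y) l1)) l2).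
Proof.
  induction l1 as [|a l1 IH]; simpl.
  - symmetry; apply sumL_map_zero.
  - now rewrite IH, <- sumL_map_plus.
Qed.

Definition rotate (a : R) (p : point) : point :=
  (cos a * fst p - sin a * snd p, sin a * fst p + cos a * snd p).

Lemma rotate_rotate a b p : rotate a (rotate b p) = rotate (b + a) p.
Proof. unfold rotate; cbn [fst snd]; rewrite cos_plus, sin_plus; f_equal; ring. Qed.

Lemma rotate_2PI a p : rotate (a + 2 * PI) p = rotate a p.
Proof. unfold rotate; rewrite cos_plus, sin_plus, cos_2PI, sin_2PI; f_equal; ring. Qed.

Lemma dist2_rotate a p q : dist2 (rotate a p) (rotate a q) = dist2 p q.
Proof.
  unfold dist2, rotate; cbn [fst snd]; f_equal.
  pose proof (sin2_cos2 a) as E; unfold Rsqr in E.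
  transitivity ((sin a * sin a + cos a * cos a)
                * ((fst p - fst q) ^ 2 + (snd p - snd q) ^ 2)); [ring | rewrite E; ring].
Qed.

Lemma lerp_rotate a p q t : lerp (rotate a p) (rotate a q) t = rotate a (lerp p q t).
Proof. unfold lerp, rotate; cbn [fst snd]; f_equal; ring. Qed.

Definition octant (n : nat) : R := INR n * PI / 4.

Lemma octant_add m n : octant (m + n) = octant m + octant n.
Proof. unfold octant; rewrite plus_INR; field. Qed.

Lemma rotate_octant_mod n p : rotate (octant n) p = rotate (octant (n mod 8)) p.
Proof.
  rewrite (Nat.div_mod_eq n 8) at 1.
  induction (n / 8)%nat as [|q IH].
  - now rewrite Nat.mul_0_r, Nat.add_0_l.
  - replace (8 * S q + n mod 8)%nat with (8 * q + n mod 8 + 8)%nat by lia.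
    rewrite octant_add.
    replace (octant 8) with (2 * PI) by (unfold octant; simpl; field).
    now rewrite rotate_2PI.
Qed.

Lemma v_rotate k : v k = rotate (octant k) (1, 0).
Proof. unfold v, rotate, octant; cbn [fst snd]; f_equal; ring. Qed.

Lemma apex_rotate k : apex k = rotate (octant k) (apex 0).
Proof.
  unfold apex, rotate, octant; cbn [fst snd].
  replace ((2 * INR k + 1) * PI / 8) with (INR k * PI / 4 + (2 * INR 0 + 1) * PI / 8)
    by (simpl; field).
  rewrite cos_plus, sin_plus; f_equal; ring.
Qed.

Lemma rotate_octant_v m k : rotate (octant m) (v k) = v (k + m).
Proof. now rewrite !v_rotate, rotate_rotate, octant_add. Qed.

Lemma rotate_octant_apex m k : rotate (octant m) (apex k) = apex (k + m).
Proof. now rewrite (apex_rotate k), (apex_rotate (k + m)), rotate_rotate, octant_add. Qed.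

Definition rotseg (a : R) (e : point * point) : point * point :=
  (rotate a (fst e), rotate a (snd e)).

Lemma seglen_rotseg a e : seglen (rotseg a e) = seglen e.
Proof. apply dist2_rotate. Qed.

(* The rotation acts pointwise on the integrands, so no integrability is needed. *)
Lemma pair_mass_rotseg r a e f : pair_mass r (rotseg a e) (rotseg a f) = pair_mass r e f.
Proof.
  unfold pair_mass; rewrite !seglen_rotseg; do 2 f_equal.
  apply functional_extensionality; intro s; f_equal.
  apply functional_extensionality; intro t.
  unfold rotseg; cbn [fst snd].
  now rewrite !lerp_rotate, dist2_rotate.
Qed.

Lemma map_rotseg_rotseg a b l :
  map (rotseg a) (map (rotseg b) l) = map (rotseg (b + a)) l.
Proof.
  rewrite map_map; apply map_ext; intro e.
  unfold rotseg; cbn [fst snd]; now rewrite !rotate_rotate.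
Qed.

Lemma map_rotseg_octant_mod n l :
  map (rotseg (octant n)) l = map (rotseg (octant (n mod 8))) l.
Proof. apply map_ext; intro e; unfold rotseg; now rewrite !(rotate_octant_mod n). Qed.

Definition edge_block (b : bool) : list (point * point) :=
  if b then [(v 0, apex 0); (apex 0, v 1)] else [(v 0, v 1)].

Lemma segments_rotated_blocks S :
  segments S = flat_map (fun k => map (rotseg (octant k)) (edge_block (S k))) (seq 0 8).
Proof.
  apply flat_map_ext; intro k.
  destruct (S k); unfold edge_block, rotseg; cbn [map fst snd];
    rewrite ?rotate_octant_v, ?rotate_octant_apex, (Nat.add_comm 1 k); reflexivity.
Qed.

Definition pair_sum (r : R) (l1 l2 : list (point * point)) : R :=
  sumL (map (fun e => sumL (map (pair_mass r e) l2)) l1).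

Lemma pair_sum_flat_map {I J : Type} r (A : I -> list (point * point))
    (B : J -> list (point * point)) (li : list I) (lj : list J) :
  pair_sum r (flat_map A li) (flat_map B lj)
  = sumL (map (fun i => sumL (map (fun j => pair_sum r (A i) (B j)) lj)) li).
Proof.
  unfold pair_sum; rewrite sumL_map_flat_map; f_equal; apply map_ext; intro i.
  rewrite (map_ext _ (fun e => sumL (map (fun j => sumL (map (pair_mass r e) (B j))) lj)))
    by (intro; apply sumL_map_flat_map).
  apply sumL_exchange.
Qed.

Lemma pair_sum_rotseg r a l1 l2 :
  pair_sum r (map (rotseg a) l1) (map (rotseg a) l2) = pair_sum r l1 l2.
Proof.
  unfold pair_sum; rewrite map_map; f_equal; apply map_ext; intro e.
  rewrite map_map; f_equal; apply map_ext; apply pair_mass_rotseg.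
Qed.

Lemma pair_sum_relative r i j l1 l2 : (i < 8)%nat ->
  pair_sum r (map (rotseg (octant i)) l1) (map (rotseg (octant j)) l2)
  = pair_sum r l1 (map (rotseg (octant ((j + 8 - i) mod 8))) l2).
Proof.
  intro Hi.
  rewrite <- (pair_sum_rotseg r (octant i) l1), map_rotseg_rotseg, <- octant_add.
  rewrite (map_rotseg_octant_mod j), (map_rotseg_octant_mod (_ + i)).
  rewrite Nat.Div0.add_mod_idemp_l.
  replace (j + 8 - i + i)%nat with (j + 1 * 8)%nat by lia.
  now rewrite Nat.Div0.mod_add.
Qed.

Definition block_pair (r : R) (a b : bool) (d : nat) : R :=
  pair_sum r (edge_block a) (map (rotseg (octant d)) (edge_block b)).

Definition block_length (b : bool) : R := sumL (map seglen (edge_block b)).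

Lemma pair_sum_segments r S :
  pair_sum r (segments S) (segments S)
  = sumL (map (fun i => sumL (map (fun j => block_pair r (S i) (S j) ((j + 8 - i) mod 8))
                                  (seq 0 8))) (seq 0 8)).
Proof.
  rewrite segments_rotated_blocks, pair_sum_flat_map.
  f_equal; apply map_ext_in; intros i Hi; apply in_seq in Hi.
  f_equal; apply map_ext; intro j.
  apply pair_sum_relative; lia.
Qed.

Lemma curve_length_blocks S :
  curve_length S = sumL (map (fun i => block_length (S i)) (seq 0 8)).
Proof.
  unfold curve_length; rewrite segments_rotated_blocks, sumL_map_flat_map.
  f_equal; apply map_ext; intro i.
  unfold block_length; rewrite map_map; f_equal; apply map_ext; apply seglen_rotseg.
Qed.

(* Both sides unfold to 64 summands; [ring] checks that they agree as multisets. *)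
Lemma SX_SY_homometric (F : bool -> bool -> nat -> R) :
  sumL (map (fun i => sumL (map (fun j => F (SX i) (SX j) ((j + 8 - i) mod 8)) (seq 0 8)))
            (seq 0 8))
  = sumL (map (fun i => sumL (map (fun j => F (SY i) (SY j) ((j + 8 - i) mod 8)) (seq 0 8)))
              (seq 0 8)).
Proof. unfold SX, SY; simpl; ring. Qed.

Lemma SX_SY_same_size (G : bool -> R) :
  sumL (map (fun i => G (SX i)) (seq 0 8)) = sumL (map (fun i => G (SY i)) (seq 0 8)).
Proof. unfold SX, SY; simpl; ring. Qed.

Lemma H_SX_SY r : H SX r = H SY r.
Proof.
  change (pair_sum r (segments SX) (segments SX) / curve_length SX ^ 2
          = pair_sum r (segments SY) (segments SY) / curve_length SY ^ 2).
  rewrite !pair_sum_segments, !curve_length_blocks.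
  now rewrite (SX_SY_homometric (block_pair r)), (SX_SY_same_size block_length).
Qed.

Definition nsq (p : point) : R := fst p ^ 2 + snd p ^ 2.
Definition dsq (p q : point) : R := (fst p - fst q) ^ 2 + (snd p - snd q) ^ 2.

Lemma isometry2_dsq g p q : isometry2 g -> dsq (g p) (g q) = dsq p q.
Proof.
  intro Hg; specialize (Hg p q); unfold dist2 in Hg.
  apply sqrt_inj in Hg; auto; apply Rplus_le_le_0_compat; apply pow2_ge_0.
Qed.

Lemma nsq_lerp_le p q t : 0 <= t <= 1 -> nsq (lerp p q t) <= (1 - t) * nsq p + t * nsq q.
Proof.
  intro Ht.
  assert (E : nsq (lerp p q t) = (1 - t) * nsq p + t * nsq q - t * (1 - t) * dsq p q)
    by (unfold nsq, lerp, dsq; cbn [fst snd]; ring).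
  assert (0 <= t * (1 - t) * dsq p q).
  { apply Rmult_le_pos; [nra | unfold dsq; apply Rplus_le_le_0_compat; apply pow2_ge_0]. }
  lra.
Qed.

Lemma lerp_0 p q : lerp p q 0 = p.
Proof. destruct p; unfold lerp; cbn; f_equal; ring. Qed.

Lemma lerp_1 p q : lerp p q 1 = q.
Proof. destruct p, q; unfold lerp; cbn; f_equal; ring. Qed.

Lemma nsq_v k : nsq (v k) = 1.
Proof.
  unfold nsq, v; cbn [fst snd].
  pose proof (sin2_cos2 (INR k * PI / 4)) as E; unfold Rsqr in E.
  rewrite <- E; ring.
Qed.

Lemma nsq_apex k : nsq (apex k) = 196 / 100.
Proof.
  unfold nsq, apex; cbn [fst snd].
  set (a := (2 * INR k + 1) * PI / 8).
  pose proof (sin2_cos2 a) as E; unfold Rsqr in E.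
  transitivity ((14 / 10) ^ 2 * (sin a * sin a + cos a * cos a)); [ring | rewrite E; field].
Qed.

Lemma in_segments S p q : In (p, q) (segments S) ->
  exists k, (S k = true /\ ((p, q) = (v k, apex k) \/ (p, q) = (apex k, v (k + 1))))
            \/ (S k = false /\ (p, q) = (v k, v (k + 1))).
Proof.
  unfold segments; intro Hin; apply in_flat_map in Hin as [k [_ Hin]].
  exists k; destruct (S k); simpl in Hin.
  - left; split; [reflexivity |].
    destruct Hin as [E | [E | []]]; [left | right]; now symmetry.
  - right; split; [reflexivity |].
    destruct Hin as [E | []]; now symmetry.
Qed.

Lemma apex_in_curve S k : (k < 8)%nat -> S k = true -> curve S (apex k).
Proof.
  intros Hk8 Hk; exists (v k, apex k); split.
  - unfold segments; apply in_flat_map; exists k; split; [apply in_seq; lia |].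
    rewrite Hk; now left.
  - exists 1; split; [lra | symmetry; apply lerp_1].
Qed.

Lemma curve_nsq_le S x : curve S x -> nsq x <= 196 / 100.
Proof.
  intros [[p q] [Hin [t [Ht ->]]]]; cbn [fst snd].
  eapply Rle_trans; [apply nsq_lerp_le, Ht |].
  destruct (in_segments S p q Hin) as [k [[_ [E | E]] | [_ E]]]; injection E as -> ->;
    rewrite ?nsq_v, ?nsq_apex; lra.
Qed.

Lemma curve_nsq_max S x : curve S x -> 196 / 100 <= nsq x -> exists k, S k = true /\ x = apex k.
Proof.
  intros [[p q] [Hin [t [Ht ->]]]] Hmax; cbn [fst snd] in *.
  pose proof (nsq_lerp_le p q t Ht) as Hle.
  destruct (in_segments S p q Hin) as [k [[Hk [E | E]] | [_ E]]]; injection E as -> ->;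
    rewrite ?nsq_v, ?nsq_apex in Hle; [| | lra]; exists k; split; auto.
  - replace t with 1 by lra; now rewrite lerp_1.
  - replace t with 0 by lra; now rewrite lerp_0.
Qed.

Lemma antipodal_of_far rho x y : nsq x <= rho -> nsq y <= rho -> 4 * rho <= dsq x y ->
  nsq x = rho /\ fst y = - fst x /\ snd y = - snd x.
Proof.
  unfold nsq, dsq; destruct x as [x1 x2], y as [y1 y2]; cbn [fst snd]; intros Hx Hy Hd.
  assert (Hsum : (x1 + y1) ^ 2 + (x2 + y2) ^ 2 <= 0) by nra.
  pose proof (pow2_ge_0 (x1 + y1)); pose proof (pow2_ge_0 (x2 + y2)).
  assert (x1 + y1 = 0) by (apply Rsqr_0_uniq; rewrite Rsqr_pow2; lra).
  assert (x2 + y2 = 0) by (apply Rsqr_0_uniq; rewrite Rsqr_pow2; lra).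
  repeat split; nra.
Qed.

Lemma dsq_antipodal_sum x p q : fst q = - fst p -> snd q = - snd p ->
  dsq x p + dsq x q = 2 * nsq x + 2 * nsq p.
Proof. unfold dsq, nsq; intros -> ->; ring. Qed.

(* Parallelogram law: [nsq x] is determined by the distances from [x] to an antipodal pair. *)
Lemma isometry_nsq_via_antipodes g p q x : isometry2 g ->
  fst q = - fst p -> snd q = - snd p -> fst (g q) = - fst (g p) -> snd (g q) = - snd (g p) ->
  nsq (g p) = nsq p -> nsq (g x) = nsq x.
Proof.
  intros Hg Hq1 Hq2 Hgq1 Hgq2 Hp.
  pose proof (dsq_antipodal_sum x p q Hq1 Hq2) as E.
  pose proof (dsq_antipodal_sum (g x) (g p) (g q) Hgq1 Hgq2) as Eg.
  rewrite !isometry2_dsq in Eg by exact Hg.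
  lra.
Qed.

Lemma apex_add4 k : fst (apex (k + 4)) = - fst (apex k) /\ snd (apex (k + 4)) = - snd (apex k).
Proof.
  unfold apex; cbn [fst snd]; rewrite plus_INR.
  replace ((2 * (INR k + INR 4) + 1) * PI / 8) with ((2 * INR k + 1) * PI / 8 + PI)
    by (simpl; field).
  rewrite neg_cos, neg_sin; split; ring.
Qed.

Definition octant_cos (d : nat) : R :=
  match d with
  | 0 => 1 | 1 => cos (PI / 4) | 2 => 0 | 3 => - cos (PI / 4)
  | 4 => -1 | 5 => - cos (PI / 4) | 6 => 0 | _ => cos (PI / 4)
  end.

Lemma cos_octant d : (d < 8)%nat -> cos (octant d) = octant_cos d.
Proof.
  intro Hd; unfold octant, octant_cos.
  destruct d as [|[|[|[|[|[|[|[|d]]]]]]]]; try lia.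
  - replace (INR 0 * PI / 4) with 0 by (simpl; field); apply cos_0.
  - replace (INR 1 * PI / 4) with (PI / 4) by (simpl; field); reflexivity.
  - replace (INR 2 * PI / 4) with (PI / 2) by (simpl; field); apply cos_PI2.
  - replace (INR 3 * PI / 4) with (PI / 4 + PI / 2) by (simpl; field).
    rewrite cos_plus, cos_PI2, sin_PI2, sin_PI4, cos_PI4; ring.
  - replace (INR 4 * PI / 4) with PI by (simpl; field); apply cos_PI.
  - replace (INR 5 * PI / 4) with (PI / 4 + PI) by (simpl; field); apply neg_cos.
  - replace (INR 6 * PI / 4) with (PI / 2 + PI) by (simpl; field).
    rewrite neg_cos, cos_PI2; ring.
  - replace (INR 7 * PI / 4) with (PI / 4 + PI / 2 + PI) by (simpl; field).
    rewrite neg_cos, cos_plus, cos_PI2, sin_PI2, sin_PI4, cos_PI4; ring.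
Qed.

Lemma cos_PI4_bounds : 0 < cos (PI / 4) < 1.
Proof.
  rewrite cos_PI4.
  assert (1 < sqrt 2) by (rewrite <- sqrt_1; apply sqrt_lt_1; lra).
  split; [apply Rdiv_lt_0_compat; lra |].
  apply (Rmult_lt_reg_r (sqrt 2)); [lra |]; field_simplify; lra.
Qed.

(* [(i - j) + (j - i)] is [|i - j|] in truncated subtraction. *)
Lemma dsq_apex i j : (i < 8)%nat -> (j < 8)%nat ->
  dsq (apex i) (apex j) = 392 / 100 * (1 - octant_cos ((i - j) + (j - i))).
Proof.
  intros Hi Hj; rewrite <- cos_octant by lia.
  unfold dsq, apex; cbn [fst snd].
  set (a := (2 * INR i + 1) * PI / 8); set (b := (2 * INR j + 1) * PI / 8).
  assert (Hab : cos (octant ((i - j) + (j - i))) = cos (a - b)).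
  { unfold octant, a, b; destruct (Nat.le_ge_cases j i).
    - replace (j - i)%nat with 0%nat by lia; rewrite Nat.add_0_r, minus_INR by lia.
      f_equal; field.
    - replace (i - j)%nat with 0%nat by lia; rewrite Nat.add_0_l, minus_INR by lia.
      rewrite <- cos_neg; f_equal; field. }
  rewrite Hab, cos_minus.
  pose proof (sin2_cos2 a) as Ea; pose proof (sin2_cos2 b) as Eb; unfold Rsqr in Ea, Eb.
  transitivity ((14 / 10) ^ 2 * ((sin a * sin a + cos a * cos a) + (sin b * sin b + cos b * cos b)
     - 2 * (cos a * cos b + sin a * sin b))); [ring | rewrite Ea, Eb; field].
Qed.

Lemma SX_spec k : SX k = true -> k = 0%nat \/ k = 4%nat \/ k = 5%nat \/ k = 7%nat.
Proof. unfold SX; destruct k as [|[|[|[|[|[|[|[|k]]]]]]]]; simpl; intros; auto; discriminate. Qed.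

Lemma SX_apexes_not_like_SY k0 k1 k7 : SX k0 = true -> SX k1 = true -> SX k7 = true ->
  dsq (apex k0) (apex k1) = dsq (apex 0) (apex 1) ->
  dsq (apex k0) (apex k7) = dsq (apex 0) (apex 7) ->
  dsq (apex k1) (apex k7) = dsq (apex 1) (apex 7) -> False.
Proof.
  intros H0 H1 H7; pose proof cos_PI4_bounds.
  destruct (SX_spec k0 H0) as [-> | [-> | [-> | ->]]];
  destruct (SX_spec k1 H1) as [-> | [-> | [-> | ->]]];
  destruct (SX_spec k7 H7) as [-> | [-> | [-> | ->]]];
  rewrite !dsq_apex by lia; cbv [octant_cos Nat.sub Nat.add]; lra.
Qed.

Lemma SX_SY_not_congruent g : isometry2 g ->
  ~ (forall y, curve SY y <-> exists x, curve SX x /\ g x = y).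
Proof.
  intros Hg Hcong.
  assert (preimage : forall k, (k < 8)%nat -> SY k = true ->
                     exists x, curve SX x /\ g x = apex k)
    by (intros k Hk8 Hk; apply Hcong, apex_in_curve; assumption).
  destruct (preimage 0%nat ltac:(lia) eq_refl) as [x0 [C0 G0]].
  destruct (preimage 4%nat ltac:(lia) eq_refl) as [x4 [C4 G4]].
  destruct (preimage 1%nat ltac:(lia) eq_refl) as [x1 [C1 G1]].
  destruct (preimage 7%nat ltac:(lia) eq_refl) as [x7 [C7 G7]].
  destruct (apex_add4 0) as [A1 A2]; change (0 + 4)%nat with 4%nat in A1, A2.
  assert (D04 : dsq x0 x4 = 4 * (196 / 100)).
  { rewrite <- (isometry2_dsq g x0 x4 Hg), G0, G4, <- (nsq_apex 0).
    unfold dsq, nsq; rewrite A1, A2; ring. }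
  destruct (antipodal_of_far (196 / 100) x0 x4
              (curve_nsq_le _ _ C0) (curve_nsq_le _ _ C4) ltac:(lra)) as [N0 [F1 F2]].
  assert (nsq_g : forall x, nsq (g x) = nsq x).
  { intro x; apply (isometry_nsq_via_antipodes g x0 x4 x Hg F1 F2);
      rewrite ?G0, ?G4, ?nsq_apex; auto. }
  assert (to_apex : forall x k, curve SX x -> g x = apex k ->
                    exists k', SX k' = true /\ x = apex k').
  { intros x k Cx Gx; apply (curve_nsq_max SX x Cx).
    now rewrite <- nsq_g, Gx, nsq_apex. }
  destruct (to_apex x0 _ C0 G0) as [k0 [S0 ->]].
  destruct (to_apex x1 _ C1 G1) as [k1 [S1 ->]].
  destruct (to_apex x7 _ C7 G7) as [k7 [S7 ->]].
  apply (SX_apexes_not_like_SY k0 k1 k7 S0 S1 S7);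
    rewrite <- (isometry2_dsq g _ _ Hg); congruence.
Qed.

Theorem proposition5p4 :
  (forall g : point -> point, isometry2 g ->
     ~ (forall y, curve SY y <-> exists x, curve SX x /\ g x = y)) /\
  (forall r : R, 0 <= r -> H SX r = H SY r).
Proof.
  split.
  - exact SX_SY_not_congruent.
  - intros r _; apply H_SX_SY.
Qed.
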